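(* ${\sf ITL}^0_{\circ}$ is complete for the class of expanding posets, and ${\sf ITL}^{\sf FS}_{\circ}$ is complete for the class of persistent posets; that is, every $\mathcal L_\circ$-formula valid on all expanding posets belongs to ${\sf ITL}^0_\circ$, and every $\mathcal L_\circ$-formula valid on all persistent posets belongs to ${\sf ITL}^{\sf FS}_\circ$.
   Context: Syntax: fix a countably infinite set $\mathbb P$ of propositional variables. $\mathcal L_\circ$ is given by $\varphi ::= \bot \mid p \mid \varphi\wedge\varphi \mid \varphi\vee\varphi \mid \varphi\to\varphi \mid \circ\varphi$ with $p\in\mathbb P$; $\neg\varphi:=\varphi\to\bot$. Semantics: a dynamical system is $(X,\mathcal T,f)$ with $(X,\mathcal T)$ a topological space and $f\colon X\to X$ continuous. A valuation assigns to each formula an open set with $[\![\bot]\!]=\varnothing$, $[\![\varphi\wedge\psi]\!]=[\![\varphi]\!]\cap[\![\psi]\!]$, $[\![\varphi\vee\psi]\!]=[\![\varphi]\!]\cup[\![\psi]\!]$, $[\![\varphi\to\psi]\!]=\big((X\setminus[\![\varphi]\!])\cup[\![\psi]\!]\big)^\circ$, $[\![\circ\varphi]\!]=f^{-1}[\![\varphi]\!]$. A formula is valid on a class if $[\![\varphi]\!]=X$ for every system of the class and every valuation. An expanding poset is a dynamical system whose topology is the up-set topology of a partial order $\preccurlyeq$ (open sets = upward closed sets); equivalently $f$ is monotone. A persistent poset is an expanding poset whose map $f$ is moreover open (equivalently: whenever $f(w)\preccurlyeq v'$ there is $w'\succcurlyeq w$ with $f(w')=v'$). Logics: ${\sf ITL}^0_\circ$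 is the least set of $\mathcal L_\circ$-formulas containing all substitution instances of the axioms of intuitionistic propositional logic and of (N1) $\neg\circ\bot$, (N2) $\circ\varphi\wedge\circ\psi\to\circ(\varphi\wedge\psi)$, (N3) $\circ(\varphi\vee\psi)\to\circ\varphi\vee\circ\psi$, (N4) $\circ(\varphi\to\psi)\to(\circ\varphi\to\circ\psi)$, closed under modus ponens and the rule from $\varphi$ infer $\circ\varphi$. ${\sf ITL}^{\sf FS}_\circ$ is defined in the same way but additionally with the axiom (N5) $(\circ\varphi\to\circ\psi)\to\circ(\varphi\to\psi)$. *)

Inductive form : Type :=
| Bot : form
| Var : nat -> form
| And : form -> form -> form
| Or  : form -> form -> form
| Imp : form -> form -> form
| Next : form -> form.

Definition Neg (p : form) : form := Imp p Bot.

(* Hilbert calculus.  [fs = false] gives ITL^0_circ, [fs = true] gives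
   ITL^FS_circ (adds N5).  Axioms are schemata, so they include all
   substitution instances. *)
Inductive derivable (fs : bool) : form -> Prop :=
| ax_K : forall p q, derivable fs (Imp p (Imp q p))
| ax_S : forall p q r,
    derivable fs (Imp (Imp p (Imp q r)) (Imp (Imp p q) (Imp p r)))
| ax_AndE1 : forall p q, derivable fs (Imp (And p q) p)
| ax_AndE2 : forall p q, derivable fs (Imp (And p q) q)
| ax_AndI : forall p q, derivable fs (Imp p (Imp q (And p q)))
| ax_OrI1 : forall p q, derivable fs (Imp p (Or p q))
| ax_OrI2 : forall p q, derivable fs (Imp q (Or p q))
| ax_OrE : forall p q r,
    derivable fs (Imp (Imp p r) (Imp (Imp q r) (Imp (Or p q) r)))
| ax_Bot : forall p, derivable fs (Imp Bot p)
| ax_N1 : derivable fs (Neg (Next Bot))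
| ax_N2 : forall p q,
    derivable fs (Imp (And (Next p) (Next q)) (Next (And p q)))
| ax_N3 : forall p q,
    derivable fs (Imp (Next (Or p q)) (Or (Next p) (Next q)))
| ax_N4 : forall p q,
    derivable fs (Imp (Next (Imp p q)) (Imp (Next p) (Next q)))
| ax_N5 : forall p q, fs = true ->
    derivable fs (Imp (Imp (Next p) (Next q)) (Next (Imp p q)))
| rule_MP : forall p q, derivable fs (Imp p q) -> derivable fs p -> derivable fs q
| rule_Nec : forall p, derivable fs p -> derivable fs (Next p).

Definition ITL0 (p : form) : Prop := derivable false p.
Definition ITLFS (p : form) : Prop := derivable true p.

Definition is_partial_order {X : Type} (le : X -> X -> Prop) : Prop :=
  (forall x, le x x) /\
  (forall x y z, le x y -> le y z -> le x z) /\
  (forall x y, le x y -> le y x -> x = y).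

(* Open sets of the up-set topology. *)
Definition upset {X : Type} (le : X -> X -> Prop) (S : X -> Prop) : Prop :=
  forall x y, le x y -> S x -> S y.

(* Interior operator of the up-set topology (largest up-set inside S). *)
Definition upint {X : Type} (le : X -> X -> Prop) (S : X -> Prop) : X -> Prop :=
  fun x => forall y, le x y -> S y.

(* Expanding poset: up-set topology of a partial order, f continuous
   (= monotone). *)
Definition expanding_poset {X : Type} (le : X -> X -> Prop) (f : X -> X) : Prop :=
  is_partial_order le /\ (forall x y, le x y -> le (f x) (f y)).

(* Persistent poset: additionally f is open. *)
Definition persistent_poset {X : Type} (le : X -> X -> Prop) (f : X -> X) : Prop :=
  expanding_poset le f /\
  (forall w v', le (f w) v' -> exists w', le w w' /\ f w' = v').

(* Topological semantics specialised to the up-set topology: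
   [[p -> q]] = interior((X \ [[p]]) U [[q]]), [[o p]] = f^{-1}[[p]]. *)
Fixpoint sem {X : Type} (le : X -> X -> Prop) (f : X -> X)
    (V : nat -> X -> Prop) (p : form) : X -> Prop :=
  match p with
  | Bot => fun _ => False
  | Var n => V n
  | And p q => fun x => sem le f V p x /\ sem le f V q x
  | Or p q => fun x => sem le f V p x \/ sem le f V q x
  | Imp p q => upint le (fun x => ~ sem le f V p x \/ sem le f V q x)
  | Next p => fun x => sem le f V p (f x)
  end.

Definition valid_on {X : Type} (le : X -> X -> Prop) (f : X -> X) (p : form) : Prop :=
  forall V : nat -> X -> Prop, (forall n, upset le (V n)) ->
    forall x, sem le f V p x.

Definition valid_expanding (p : form) : Prop :=
  forall (X : Type) (le : X -> X -> Prop) (f : X -> X),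
    expanding_poset le f -> valid_on le f p.

Definition valid_persistent (p : form) : Prop :=
  forall (X : Type) (le : X -> X -> Prop) (f : X -> X),
    persistent_poset le f -> valid_on le f p.

From Stdlib Require Import Classical FunctionalExtensionality PropExtensionality ProofIrrelevance.
From Stdlib Require Import List Lia Cantor.
Import ListNotations.

(* Canonical model argument.  Worlds are prime theories ordered by inclusion, and the map sends
   a theory [W] to [{phi | Next phi ∈ W}], which N1, N3, N4 and necessitation make a prime theory
   again; this map is monotone, so the canonical model is an expanding poset.  The Lindenbaum
   lemma for pairs [(G, D)] (no finite disjunction of [D] derivable from [G]), proved by
   enumerating all formulas, gives the truth lemma and hence completeness.  With N5 the map is
   moreover open: if [f w ⊆ v], the pair [(w ∪ Next v, Next (complement of v))] is
   consistent and every prime extension [w'] of it has [f w' = v]. *)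

Fixpoint encode (p : form) : nat :=
  match p with
  | Bot => to_nat (0, 0)
  | Var n => to_nat (1, n)
  | And p q => to_nat (2, to_nat (encode p, encode q))
  | Or p q => to_nat (3, to_nat (encode p, encode q))
  | Imp p q => to_nat (4, to_nat (encode p, encode q))
  | Next p => to_nat (5, encode p)
  end.

Fixpoint height (p : form) : nat :=
  match p with
  | Bot | Var _ => 0
  | And p q | Or p q | Imp p q => S (max (height p) (height q))
  | Next p => S (height p)
  end.

Fixpoint decode (fuel n : nat) : form :=
  match fuel with
  | 0 => Bot
  | S fuel =>
    let '(tag, r) := of_nat n in
    let '(i, j) := of_nat r in
    match tag with
    | 0 => Bot
    | 1 => Var r
    | 2 => And (decode fuel i) (decode fuel j)
    | 3 => Or (decode fuel i) (decode fuel j)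
    | 4 => Imp (decode fuel i) (decode fuel j)
    | _ => Next (decode fuel r)
    end
  end.

Lemma decode_encode p fuel : height p < fuel -> decode fuel (encode p) = p.
Proof.
  revert fuel; induction p; intros [|fuel] Hfuel; cbn [height] in Hfuel; try lia;
    cbn [encode decode]; rewrite !cancel_of_to;
    rewrite ?IHp, ?IHp1, ?IHp2 by lia; first [reflexivity | now destruct (of_nat _)].
Qed.

Definition enum_form (n : nat) : form := let '(fuel, m) := of_nat n in decode fuel m.

Lemma enum_form_surj p : exists n, enum_form n = p.
Proof.
  exists (to_nat (S (height p), encode p)).
  unfold enum_form. rewrite cancel_of_to. apply decode_encode. lia.
Qed.

Section Derivations.

Variable fs : bool.

Definition adjoin (G : form -> Prop) (a : form) : form -> Prop := fun x => G x \/ x = a.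

Inductive derives (G : form -> Prop) : form -> Prop :=
| derives_ax : forall p, derivable fs p -> derives G p
| derives_hyp : forall p, G p -> derives G p
| derives_mp : forall p q, derives G (Imp p q) -> derives G p -> derives G q.

Lemma derivable_imp_refl p : derivable fs (Imp p p).
Proof.
  eapply rule_MP; [eapply rule_MP|]; [apply (ax_S fs p (Imp p p) p)|apply ax_K..].
Qed.

Lemma deduction G a p : derives (adjoin G a) p -> derives G (Imp a p).
Proof.
  induction 1 as [p Hp|p [Hp| ->]|p q _ IHpq _ IHp].
  - eapply derives_mp; apply derives_ax; [apply ax_K|exact Hp].
  - eapply derives_mp; [apply derives_ax, ax_K|apply derives_hyp, Hp].
  - apply derives_ax, derivable_imp_refl.
  - eapply derives_mp; [eapply derives_mp|];
      [apply derives_ax, (ax_S fs a p q)|exact IHpq|exact IHp].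
Qed.

Lemma derives_mono G G' p : (forall x, G x -> G' x) -> derives G p -> derives G' p.
Proof.
  intros HG. induction 1; [apply derives_ax|apply derives_hyp|eapply derives_mp]; eauto.
Qed.

Lemma derives_adjoin G a p : derives G p -> derives (adjoin G a) p.
Proof. apply derives_mono. unfold adjoin; auto. Qed.

Lemma derives_none p : derives (fun _ => False) p -> derivable fs p.
Proof.
  induction 1; [assumption|contradiction|eapply rule_MP; eassumption].
Qed.

Lemma derives_imp G p q : derivable fs (Imp p q) -> derives G p -> derives G q.
Proof. intros Hpq. apply derives_mp, derives_ax, Hpq. Qed.

Lemma derives_and G a b : derives G a -> derives G b -> derives G (And a b).
Proof. intros Ha. apply derives_mp. eapply derives_imp; [apply ax_AndI|exact Ha]. Qed.

Lemma derives_or_elim G a b c :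
  derives G (Or a b) -> derives (adjoin G a) c -> derives (adjoin G b) c -> derives G c.
Proof.
  intros Hab Hac Hbc. eapply derives_mp; [|exact Hab].
  eapply derives_mp; [|apply deduction, Hbc].
  eapply derives_mp; [apply derives_ax, ax_OrE|apply deduction, Hac].
Qed.

Lemma derivable_next_mono a b : derivable fs (Imp a b) -> derivable fs (Imp (Next a) (Next b)).
Proof. intro Hab. eapply rule_MP; [apply ax_N4|apply rule_Nec, Hab]. Qed.

End Derivations.

Ltac by_hyp := apply derives_hyp; unfold adjoin; intuition (auto; try reflexivity).

Fixpoint big_or (l : list form) : form :=
  match l with [] => Bot | a :: l => Or a (big_or l) end.

Section Consistency.

Variable fs : bool.

Definition consistent (G D : form -> Prop) : Prop :=
  forall l, (forall x, In x l -> D x) -> ~ derives fs G (big_or l).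

Lemma consistent_mono G D G' D' :
  consistent G D -> (forall x, G' x -> G x) -> (forall x, D' x -> D x) -> consistent G' D'.
Proof.
  intros HGD HG HD l Hl Hder. apply (HGD l); [auto|]. eapply derives_mono; eauto.
Qed.

Lemma derives_big_or_app_l G l1 l2 : derives fs G (big_or l1) -> derives fs G (big_or (l1 ++ l2)).
Proof.
  revert G; induction l1 as [|a l1 IH]; intros G H; simpl in *.
  - eapply derives_imp; [apply ax_Bot|exact H].
  - eapply derives_or_elim; [exact H| |].
    + eapply derives_imp; [apply ax_OrI1|by_hyp].
    + eapply derives_imp; [apply ax_OrI2|apply IH; by_hyp].
Qed.

Lemma derives_big_or_app_r G l1 l2 : derives fs G (big_or l2) -> derives fs G (big_or (l1 ++ l2)).
Proof.
  induction l1 as [|a l1 IH]; intros H; simpl; [exact H|].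
  eapply derives_imp; [apply ax_OrI2|auto].
Qed.

Lemma big_or_adjoin_split D a l : (forall x, In x l -> adjoin D a x) ->
  exists l', (forall x, In x l' -> D x) /\
    forall G, derives fs G (big_or l) -> derives fs G (Or a (big_or l')).
Proof.
  induction l as [|b l IH]; intros Hl.
  - exists []. split; [simpl; tauto|]. intros G H. eapply derives_imp; [apply ax_Bot|exact H].
  - destruct IH as [l' [Hl' Hsplit]]; [intros x Hx; apply Hl; simpl; auto|].
    destruct (Hl b (or_introl eq_refl)) as [Db| ->].
    + exists (b :: l'). split; [intros x [<-|Hx]; auto|].
      intros G H. eapply derives_or_elim; [exact H| |].
      * eapply derives_imp; [apply ax_OrI2|]. eapply derives_imp; [apply ax_OrI1|by_hyp].
      * eapply derives_or_elim; [apply Hsplit; by_hyp| |].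
        -- eapply derives_imp; [apply ax_OrI1|by_hyp].
        -- eapply derives_imp; [apply ax_OrI2|]. eapply derives_imp; [apply ax_OrI2|by_hyp].
    + exists l'. split; [exact Hl'|]. intros G H. eapply derives_or_elim; [exact H| |].
      * eapply derives_imp; [apply ax_OrI1|by_hyp].
      * apply Hsplit. by_hyp.
Qed.

Lemma consistent_split G D a :
  consistent G D -> consistent (adjoin G a) D \/ consistent G (adjoin D a).
Proof.
  intros HGD. apply NNPP. intros Hn. apply not_or_and in Hn as [Hleft Hright].
  apply Hleft. intros l1 Hl1 Hder1. apply Hright. intros l2 Hl2 Hder2.
  destruct (big_or_adjoin_split D a l2 Hl2) as [l' [Hl' Hsplit]].
  apply (HGD (l1 ++ l')).
  - intros x Hx. apply in_app_or in Hx as [Hx|Hx]; auto.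
  - eapply derives_or_elim; [apply Hsplit, Hder2| |].
    + apply derives_big_or_app_l, Hder1.
    + apply derives_big_or_app_r. by_hyp.
Qed.

Lemma derives_big_or_const G p l :
  (forall x, In x l -> x = p) -> derives fs G (big_or l) -> derives fs G p.
Proof.
  revert G; induction l as [|a l IH]; intros G Hl Hder; simpl in Hder.
  - eapply derives_imp; [apply ax_Bot|exact Hder].
  - eapply derives_or_elim; [exact Hder| |].
    + rewrite <- (Hl a (or_introl eq_refl)). by_hyp.
    + apply IH; [intros x Hx; apply Hl; simpl; auto|by_hyp].
Qed.

Lemma consistent_single G p : ~ derives fs G p -> consistent G (eq p).
Proof.
  intros Hp l Hl Hder. apply Hp, (derives_big_or_const G p l); [|exact Hder].
  intros x Hx. symmetry. apply Hl, Hx.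
Qed.

End Consistency.

Section Lindenbaum.

Variable fs : bool.

Record prime_theory (W : form -> Prop) : Prop := {
  theory_closed : forall p, derives fs W p -> W p;
  theory_not_bot : ~ W Bot;
  theory_prime : forall a b, W (Or a b) -> W a \/ W b }.

Lemma consistent_total_prime W D :
  consistent fs W D -> (forall x, W x \/ D x) -> prime_theory W.
Proof.
  intros HWD Htot.
  assert (Hclosed : forall p, derives fs W p -> W p).
  { intros p Hp. destruct (Htot p) as [|Dp]; [assumption|].
    exfalso. apply (HWD [p]); [intros x [<-|[]]; exact Dp|].
    eapply derives_imp; [apply ax_OrI1|exact Hp]. }
  split; [exact Hclosed| |].
  - intros Hbot. apply (HWD []); [intros x []|]. apply derives_hyp, Hbot.
  - intros a b Hab. destruct (Htot a) as [|Da]; [auto|]. destruct (Htot b) as [|Db]; [auto|].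
    exfalso. apply (HWD [a; b]); [intros x [<-|[<-|[]]]; assumption|].
    eapply derives_or_elim; [apply derives_hyp, Hab| |].
    + eapply derives_imp; [apply ax_OrI1|by_hyp].
    + eapply derives_imp; [apply ax_OrI2|]. eapply derives_imp; [apply ax_OrI1|by_hyp].
Qed.

Section Chain.

Variable chain : nat -> form -> Prop.
Hypothesis chain_mono : forall n m x, n <= m -> chain n x -> chain m x.

Lemma derives_chain p :
  derives fs (fun x => exists n, chain n x) p -> exists n, derives fs (chain n) p.
Proof.
  induction 1 as [p Hp|p [n Hp]|p q _ [n1 Hpq] _ [n2 Hp]].
  - exists 0. apply derives_ax, Hp.
  - exists n. apply derives_hyp, Hp.
  - exists (max n1 n2).
    eapply derives_mp; (eapply derives_mono; [|eassumption]); intros x; apply chain_mono; lia.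
Qed.

Lemma list_in_chain l :
  (forall x, In x l -> exists n, chain n x) -> exists n, forall x, In x l -> chain n x.
Proof.
  induction l as [|a l IH]; intros Hl.
  - exists 0. intros x [].
  - destruct (Hl a (or_introl eq_refl)) as [n1 Ha].
    destruct IH as [n2 Hn2]; [intros x Hx; apply Hl; simpl; auto|].
    exists (max n1 n2). intros x [<-|Hx].
    + apply (chain_mono n1); [lia|exact Ha].
    + apply (chain_mono n2); [lia|apply Hn2, Hx].
Qed.

End Chain.

Definition extend_pair (P : (form -> Prop) * (form -> Prop)) (a : form) :=
  let '(A, B) := P in
  (fun x => A x \/ (x = a /\ consistent fs (adjoin A a) B),
   fun x => B x \/ (x = a /\ ~ consistent fs (adjoin A a) B)).

Lemma extend_pair_consistent A B a :
  consistent fs A B -> consistent fs (fst (extend_pair (A, B) a)) (snd (extend_pair (A, B) a)).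
Proof.
  intros HAB. simpl. destruct (classic (consistent fs (adjoin A a) B)) as [Hc|Hc].
  - eapply consistent_mono; [exact Hc| |]; unfold adjoin.
    + intros x [Hx|[-> _]]; auto.
    + intros x [Hx|[_ Hn]]; tauto.
  - destruct (consistent_split fs A B a HAB) as [|Hc']; [contradiction|].
    eapply consistent_mono; [exact Hc'| |]; unfold adjoin.
    + intros x [Hx|[_ Hn]]; tauto.
    + intros x [Hx|[-> _]]; auto.
Qed.

Variables G D : form -> Prop.

Fixpoint stage (n : nat) : (form -> Prop) * (form -> Prop) :=
  match n with
  | 0 => (G, D)
  | S n => extend_pair (stage n) (enum_form n)
  end.

Lemma stage_consistent n : consistent fs G D -> consistent fs (fst (stage n)) (snd (stage n)).
Proof.
  intros HGD. induction n as [|n IH]; [exact HGD|].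
  simpl. destruct (stage n) as [A B]. apply extend_pair_consistent, IH.
Qed.

Lemma stage_mono n m x : n <= m ->
  (fst (stage n) x -> fst (stage m) x) /\ (snd (stage n) x -> snd (stage m) x).
Proof.
  induction 1 as [|m _ IH]; [tauto|]. simpl. destruct (stage m) as [A B]. simpl in *. tauto.
Qed.

Lemma stage_decides x : exists n, fst (stage n) x \/ snd (stage n) x.
Proof.
  destruct (enum_form_surj x) as [n <-]. exists (S n). simpl.
  destruct (stage n) as [A B]. simpl. tauto.
Qed.

Theorem lindenbaum : consistent fs G D -> exists W, prime_theory W /\
  (forall x, G x -> W x) /\ (forall x, D x -> ~ W x).
Proof.
  intros HGD.
  set (W := fun x => exists n, fst (stage n) x).
  set (Dlim := fun x => exists n, snd (stage n) x).
  assert (HWD : consistent fs W Dlim).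
  { intros l Hl Hder.
    destruct (derives_chain (fun n => fst (stage n))
                (fun n m x H => proj1 (stage_mono n m x H)) _ Hder) as [n1 H1].
    destruct (list_in_chain (fun n => snd (stage n))
                (fun n m x H => proj2 (stage_mono n m x H)) l Hl) as [n2 H2].
    apply (stage_consistent (max n1 n2) HGD l).
    - intros x Hx. apply (stage_mono n2); [lia|auto].
    - eapply derives_mono; [|exact H1]. intros x. apply stage_mono; lia. }
  exists W. split; [|split].
  - apply (consistent_total_prime W Dlim HWD).
    intros x. destruct (stage_decides x) as [n [Hx|Hx]]; [left|right]; exists n; exact Hx.
  - intros x Hx. exists 0. exact Hx.
  - intros x Hx HWx. apply (HWD [x]); [intros y [<-|[]]; exists 0; exact Hx|].
    eapply derives_imp; [apply ax_OrI1|apply derives_hyp, HWx].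
Qed.

End Lindenbaum.

Section CanonicalModel.

Variable fs : bool.

Record world : Type := World {
  theory :> form -> Prop;
  theory_is_prime : prime_theory fs theory }.

Definition world_le (u v : world) : Prop := forall p, u p -> v p.

Lemma world_ext (u v : world) : (forall p, u p <-> v p) -> u = v.
Proof.
  destruct u as [U HU], v as [V HV]. simpl. intros Huv.
  assert (U = V) as <-.
  { apply functional_extensionality. intros p. apply propositional_extensionality, Huv. }
  f_equal. apply proof_irrelevance.
Qed.

Lemma exists_world G D : consistent fs G D ->
  exists w : world, (forall x, G x -> w x) /\ (forall x, D x -> ~ w x).
Proof.
  intros HGD. destruct (lindenbaum fs G D HGD) as [W [HW HGDW]]. exists (World W HW). exact HGDW.
Qed.

Lemma prime_theory_next W : prime_theory fs W -> prime_theory fs (fun p => W (Next p)).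
Proof.
  intros [Hclosed Hbot Hprime]. split.
  - intros q. induction 1 as [q Hq|q Hq|p q _ Hpq _ Hp]; [|exact Hq|].
    + apply Hclosed, derives_ax, rule_Nec, Hq.
    + apply Hclosed. eapply derives_mp; [eapply derives_mp|];
        [apply derives_ax, ax_N4|apply derives_hyp, Hpq|apply derives_hyp, Hp].
  - intros Hb. apply Hbot, Hclosed.
    eapply derives_mp; [apply derives_ax, ax_N1|apply derives_hyp, Hb].
  - intros a b Hab. apply Hprime, Hclosed.
    eapply derives_imp; [apply ax_N3|apply derives_hyp, Hab].
Qed.

Definition world_next (u : world) : world :=
  World (fun p => u (Next p)) (prime_theory_next u (theory_is_prime u)).

Lemma canonical_expanding : expanding_poset world_le world_next.
Proof.
  split; [split; [|split]|].
  - intros u p Hp. exact Hp.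
  - intros u v w Huv Hvw p Hp. auto.
  - intros u v Huv Hvu. apply world_ext. split; auto.
  - intros u v Huv p. apply Huv.
Qed.

Lemma world_imp_witness (u : world) a b :
  ~ u (Imp a b) -> exists v : world, world_le u v /\ v a /\ ~ v b.
Proof.
  intros Hab.
  assert (Hc : consistent fs (adjoin u a) (eq b)).
  { apply consistent_single. intros Hb.
    apply Hab, (theory_closed fs _ (theory_is_prime u)), deduction, Hb. }
  destruct (exists_world _ _ Hc) as [v [Huv Hvb]].
  exists v. split; [|split].
  - intros p Hp. apply Huv. left. exact Hp.
  - apply Huv. right. reflexivity.
  - apply Hvb. reflexivity.
Qed.

Definition canonical_val (n : nat) (u : world) : Prop := u (Var n).

Lemma truth_lemma p (u : world) : sem world_le world_next canonical_val p u <-> u p.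
Proof.
  revert u. induction p as [| |p IHp q IHq|p IHp q IHq|p IHp q IHq|p IHp]; intros u;
    destruct (theory_is_prime u) as [Hclosed Hbot Hprime]; simpl.
  - split; [contradiction|exact Hbot].
  - reflexivity.
  - rewrite IHp, IHq. split.
    + intros [Hp Hq]. apply Hclosed, derives_and; apply derives_hyp; assumption.
    + intros Hpq. split; apply Hclosed; (eapply derives_imp; [|apply derives_hyp, Hpq]);
        [apply ax_AndE1|apply ax_AndE2].
  - rewrite IHp, IHq. split; [|apply Hprime].
    intros [Hp|Hq]; apply Hclosed; (eapply derives_imp; [|apply derives_hyp; eassumption]);
      [apply ax_OrI1|apply ax_OrI2].
  - unfold upint. split.
    + intros Hsem. apply NNPP. intros Hpq.
      destruct (world_imp_witness u p q Hpq) as [v [Huv [Hvp Hvq]]].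
      destruct (Hsem v Huv) as [Hp|Hq]; [apply Hp, IHp, Hvp|apply Hvq, IHq, Hq].
    + intros Hpq v Huv. rewrite IHp, IHq.
      destruct (classic (v p)) as [Hp|Hp]; [right|left; exact Hp].
      apply (theory_closed fs _ (theory_is_prime v)).
      eapply derives_mp; apply derives_hyp; [apply Huv, Hpq|exact Hp].
  - apply IHp.
Qed.

Lemma canonical_complete p : valid_on world_le world_next p -> derivable fs p.
Proof.
  intros Hvalid. apply NNPP. intros Hp.
  assert (Hc : consistent fs (fun _ => False) (eq p)).
  { apply consistent_single. intros Hder. apply Hp, derives_none, Hder. }
  destruct (exists_world _ _ Hc) as [w [_ Hw]].
  apply (Hw p eq_refl), truth_lemma, Hvalid.
  intros n u v Huv. apply Huv.
Qed.

End CanonicalModel.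

Lemma derivable_big_or_next fs l : derivable fs (Imp (big_or (map Next l)) (Next (big_or l))).
Proof.
  induction l as [|a l IH]; simpl.
  - apply ax_Bot.
  - apply derives_none, deduction. eapply derives_or_elim; [by_hyp| |].
    + eapply derives_imp; [apply derivable_next_mono, ax_OrI1|by_hyp].
    + eapply derives_imp; [apply derivable_next_mono, ax_OrI2|].
      eapply derives_imp; [exact IH|by_hyp].
Qed.

Lemma prime_big_or fs W l : prime_theory fs W -> W (big_or l) -> exists x, In x l /\ W x.
Proof.
  intros [_ Hbot Hprime]. induction l as [|a l IH]; simpl; intros Hl; [contradiction|].
  destruct (Hprime _ _ Hl) as [Ha|Hl']; [eauto|].
  destruct (IH Hl') as [x [Hx Wx]]. eauto.
Qed.

Lemma list_next_inv (P : form -> Prop) m :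
  (forall x, In x m -> exists psi, P psi /\ x = Next psi) ->
  exists l, m = map Next l /\ forall x, In x l -> P x.
Proof.
  induction m as [|a m IH]; intros Hm.
  - exists []. split; [reflexivity|intros x []].
  - destruct (Hm a (or_introl eq_refl)) as [psi [Hpsi ->]].
    destruct IH as [l [-> Hl]]; [intros x Hx; apply Hm; simpl; auto|].
    exists (psi :: l). split; [reflexivity|intros x [<-|Hx]; auto].
Qed.

(* [S] is closed under conjunction, so the hypotheses [Next phi] used merge into one. *)
Lemma derives_union_next fs (W S : form -> Prop) : (forall p, derives fs S p -> S p) ->
  forall chi, derives fs (fun x => W x \/ exists phi, S phi /\ x = Next phi) chi ->
  exists phi, S phi /\ derives fs W (Imp (Next phi) chi).
Proof.
  intros HS. assert (Htop : S (Imp Bot Bot)) by apply HS, derives_ax, ax_Bot.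
  induction 1 as [chi Hchi|chi [Wchi|[phi [Hphi ->]]]|p q _ [f1 [Hf1 K1]] _ [f2 [Hf2 K2]]].
  - exists (Imp Bot Bot). split; [exact Htop|].
    eapply derives_imp; [apply ax_K|apply derives_ax, Hchi].
  - exists (Imp Bot Bot). split; [exact Htop|].
    eapply derives_imp; [apply ax_K|apply derives_hyp, Wchi].
  - exists phi. split; [exact Hphi|apply derives_ax, derivable_imp_refl].
  - exists (And f1 f2). split; [apply HS, derives_and; apply derives_hyp; assumption|].
    apply deduction. eapply derives_mp; [eapply derives_mp|]; [apply derives_adjoin, K1| |].
    + eapply derives_imp; [apply derivable_next_mono, ax_AndE1|by_hyp].
    + eapply derives_mp; [apply derives_adjoin, K2|].
      eapply derives_imp; [apply derivable_next_mono, ax_AndE2|by_hyp].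
Qed.

Definition next_preimage_pair (w v : world true) : (form -> Prop) * (form -> Prop) :=
  (fun x => w x \/ exists phi, v phi /\ x = Next phi,
   fun x => exists psi, ~ v psi /\ x = Next psi).

(* This is where N5 is used: it turns [Next phi -> Next chi] in [w] into [Next (phi -> chi)]. *)
Lemma next_preimage_pair_consistent (w v : world true) :
  world_le true (world_next true w) v ->
  consistent true (fst (next_preimage_pair w v)) (snd (next_preimage_pair w v)).
Proof.
  intros Hwv m Hm Hder.
  destruct (theory_is_prime true v) as [Hvclosed _ _].
  destruct (list_next_inv (fun psi => ~ v psi) m Hm) as [l [-> Hl]].
  destruct (derives_union_next true w v Hvclosed _ Hder) as [phi [Hphi Hw]].
  assert (Hwnext : w (Next (Imp phi (big_or l)))).
  { apply (theory_closed true _ (theory_is_prime true w)).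
    eapply derives_mp; [apply derives_ax, ax_N5, eq_refl|].
    apply deduction. eapply derives_imp; [apply derivable_big_or_next|].
    eapply derives_mp; [apply derives_adjoin, Hw|by_hyp]. }
  assert (Hvl : v (big_or l)).
  { apply Hvclosed. eapply derives_mp; apply derives_hyp; [apply Hwv, Hwnext|exact Hphi]. }
  destruct (prime_big_or true v l (theory_is_prime true v) Hvl) as [psi [Hpsi Hv]].
  exact (Hl psi Hpsi Hv).
Qed.

Lemma world_next_open (w v : world true) :
  world_le true (world_next true w) v -> exists w', world_le true w w' /\ world_next true w' = v.
Proof.
  intros Hwv.
  destruct (exists_world true _ _ (next_preimage_pair_consistent w v Hwv)) as [w' [Hleft Hright]].
  exists w'. split.
  - intros p Hp. apply Hleft. left. exact Hp.
  - apply world_ext. intros p. simpl. split.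
    + intros Hp. apply NNPP. intros Hn. exact (Hright (Next p) (ex_intro _ p (conj Hn eq_refl)) Hp).
    + intros Hp. apply Hleft. right. exists p. split; [exact Hp|reflexivity].
Qed.

Theorem theorem5p7 :
  (forall p : form, valid_expanding p -> ITL0 p) /\
  (forall p : form, valid_persistent p -> ITLFS p).
Proof.
  split; intros p Hvalid; apply canonical_complete, Hvalid.
  - apply canonical_expanding.
  - split; [apply canonical_expanding|exact world_next_open].
Qed.
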